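(* Let $X$ be a non-discrete Tychonoff space with $P$-number $\tau$, and suppose $X$ has a $\tau$-discrete basis of clopen sets. Then for every positive integer $n$, the $P$-number of $X^n$ is $\tau$ and $X^n$ has a $\tau$-discrete basis of clopen sets.
   Context: All spaces are Tychonoff. The $P$-number of a space $Z$ is $|Z|$ if $Z$ is discrete; otherwise it is the largest cardinal $\tau$ such that the intersection of any family of fewer than $\tau$ open subsets of $Z$ is open. A family of subsets of $Z$ is discrete if every point of $Z$ has a neighborhood meeting at most one member of the family. A $\tau$-discrete basis of clopen sets is a base for the topology of the form $\bigcup_{\alpha<\tau}\mathcal B_\alpha$ consisting of clopen sets, with each $\mathcal B_\alpha$ a discrete family. *)

From HB Require Import structures.
From mathcomp Require Import all_boot all_order all_algebra.
From mathcomp Require Import all_classical all_reals all_analysis.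
From mathcomp Require Import Rstruct Rstruct_topology.
From Stdlib Require Import Rdefinitions.

Set Implicit Arguments.
Unset Strict Implicit.
Unset Printing Implicit Defensive.

Local Open Scope classical_set_scope.

(* Cardinals are represented by (index) types:
   the cardinal of a type K is |K|, compared via [set: J] #<= [set: K]. *)

Definition card_lt (J K : Type) : Prop :=
  ([set: J] #<= [set: K])%card /\ ~ ([set: K] #<= [set: J])%card.

Definition completely_regular (T : topologicalType) : Prop :=
  forall (A : set T) (x : T), closed A -> ~ A x ->
    exists f : T -> R, continuous f /\ f x = 0%R /\ (forall a, A a -> f a = 1%R).

Definition tychonoff_space (T : topologicalType) : Prop :=
  accessible_space T /\ completely_regular T.

Definition discrete_top (Z : topologicalType) : Prop := forall A : set Z, open A.

Definition small_intersections_open (Z : topologicalType) (K : Type) : Prop :=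
  forall (J : Type) (U : J -> set Z), card_lt J K ->
    (forall j, open (U j)) -> open (\bigcap_(j in [set: J]) U j).

Definition pnumber_is (Z : topologicalType) (K : Type) : Prop :=
  (discrete_top Z -> ([set: Z] #= [set: K])%card) /\
  (~ discrete_top Z ->
     small_intersections_open Z K /\
     (forall K' : Type, card_lt K K' -> ~ small_intersections_open Z K')).

Definition discrete_family (Z : topologicalType) (F : set (set Z)) : Prop :=
  forall x : Z, exists V : set Z, nbhs x V /\
    (forall A B, F A -> F B -> A `&` V !=set0 -> B `&` V !=set0 -> A = B).

Definition has_discrete_clopen_basis (Z : topologicalType) (K : Type) : Prop :=
  exists B : K -> set (set Z),
    (forall a, discrete_family (B a)) /\
    (forall a U, B a U -> clopen U) /\
    basis (\bigcup_(a in [set: K]) B a).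

From HB Require Import structures.
From mathcomp Require Import all_boot all_order all_algebra.
From mathcomp Require Import all_classical all_reals all_analysis.

(* Since X is not discrete, its P-number tau is infinite, and then
   |tau^n| = |tau| (Hessenberg).  To see |T * T| <= |T| for infinite T, take
   by Zorn's lemma a maximal injective pairing g : S * S -> S on a subset S of
   T containing a copy of nat.  If S injected into its complement via h, then
   S and h(S) together would carry a pairing extending g; so by comparability
   of cardinals the complement injects into S, and then T * T injects into S.

   Boxes W_1 * ... * W_n of basic clopen sets are clopen, and those with
   W_k taken from the discrete families B(a_k) form a discrete family indexed
   by (a_1, ..., a_n), so X^n has a tau^n-, hence tau-discrete clopen basis.
   Finally, small intersections of open sets of X^n are open by looking at
   boxes, and conversely X is a retract of X^n, which gives P-number tau. *)

Set Implicit Arguments.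
Unset Strict Implicit.
Unset Printing Implicit Defensive.

Local Open Scope classical_set_scope.

Definition set_injfun (T U : Type) (A : set T) (B : set U) (f : T -> U) :=
  set_fun A B f /\ set_inj A f.

Lemma chain_bigcup2 (T : Type) (F : set (set T)) (a b : T) :
  total_on F subset -> (\bigcup_(X in F) X) a -> (\bigcup_(X in F) X) b ->
  exists2 X, F X & X a /\ X b.
Proof.
move=> Ftot [Xa FXa Xaa] [Xb FXb Xbb].
have [sab|sba] := Ftot _ _ FXa FXb.
- by exists Xb => //; split => //; exact: sab.
- by exists Xa => //; split => //; exact: sba.
Qed.

Lemma injective_rel_inj (T U : Type) (u0 : U) (A : set T) (B : set U)
    (H : set (T * U)) :
  H `<=` A `*` B -> (forall x x' y, H (x, y) -> H (x', y) -> x = x') ->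
  (forall x, A x -> exists y, H (x, y)) ->
  exists f : T -> U, set_injfun A B f.
Proof.
move=> HAB Hinj Htot.
have /choice [f Hf] : forall x, exists y, A x -> H (x, y).
  move=> x; have [/Htot [y Hxy]|nAx] := pselect (A x).
  - by exists y.
  - by exists u0.
exists f; split => [x /Hf /HAB [] //|x y /set_mem /Hf Hx /set_mem /Hf Hy fxy].
by apply: Hinj Hx _; rewrite fxy.
Qed.

Lemma set_injfun_total (T U : Type) (t0 : T) (u0 : U) (A : set T) (B : set U) :
  (exists f : T -> U, set_injfun A B f) \/ (exists g : U -> T, set_injfun B A g).
Proof.
pose matching (H : set (T * U)) := [/\ H `<=` A `*` B,
  forall x y y', H (x, y) -> H (x, y') -> y = y' &
  forall x x' y, H (x, y) -> H (x', y) -> x = x'].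
have [H [[HAB Hfun Hinj] Hmax]] :
    exists H, matching H /\ forall H', H `<` H' -> ~ matching H'.
  apply: Zorn_bigcup => F FM Ftot; split.
  - by move=> p [H FH Hp]; have [HAB _ _] := FM _ FH; exact: HAB.
  - move=> x y y' Hxy Hxy'; have [H FH [{}Hxy {}Hxy']] := chain_bigcup2 Ftot Hxy Hxy'.
    by have [_ Hfun _] := FM _ FH; exact: Hfun Hxy Hxy'.
  - move=> x x' y Hxy Hx'y; have [H FH [{}Hxy {}Hx'y]] := chain_bigcup2 Ftot Hxy Hx'y.
    by have [_ _ Hinj] := FM _ FH; exact: Hinj Hxy Hx'y.
have [Hl|/existsNP [a /not_implyP [Aa /forallNP Ha]]] :=
  pselect (forall x, A x -> exists y, H (x, y)).
  by left; apply: injective_rel_inj Hl.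
have [Hr|/existsNP [b /not_implyP [Bb /forallNP Hb]]] :=
  pselect (forall y, B y -> exists x, H (x, y)).
  right; apply: (@injective_rel_inj _ _ t0 _ _ [set p | H (p.2, p.1)]).
  - by move=> [y x] /HAB [].
  - by move=> y y' x /= Hxy Hxy'; apply: Hfun Hxy Hxy'.
  - by move=> y /Hr [x Hxy]; exists x.
exfalso; apply: (Hmax (H `|` [set (a, b)])).
  split; first exact: subsetUl.
  by move=> /(_ (a, b) (or_intror erefl)); exact: Ha.
split.
- by move=> p [/HAB //|->].
- move=> x y y' [Hxy|[? ?]] [Hxy'|[? ?]]; subst => //.
  + exact: Hfun Hxy Hxy'.
  + by case: (Ha _ Hxy).
  + by case: (Ha _ Hxy').
- move=> x x' y [Hxy|[? ?]] [Hx'y|[? ?]]; subst => //.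
  + exact: Hinj Hxy Hx'y.
  + by case: (Hb _ Hxy).
  + by case: (Hb _ Hx'y).
Qed.

Definition pairing_on (T : Type) (S : set T) (p : T * T -> T) :=
  set_injfun (S `*` S) S p.

Definition graph_on (T : Type) (S : set T) (p : T * T -> T) : set (T * T * T) :=
  [set t | (S `*` S) t.1 /\ p t.1 = t.2].

(* Partial pairings are handled through their graphs, whose domain is read off
   the diagonal, so that the union of a chain of them is again one. *)
Definition pairing_dom (T : Type) (G : set (T * T * T)) : set T :=
  [set x | exists z, G (x, x, z)].

Definition pairing_graph (T : Type) (G : set (T * T * T)) :=
  [/\ forall u z z', G (u, z) -> G (u, z') -> z = z',
      forall u u' z, G (u, z) -> G (u', z) -> u = u',
      forall x y z, G (x, y, z) ->
        [/\ pairing_dom G x, pairing_dom G y & pairing_dom G z] &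
      forall x y, pairing_dom G x -> pairing_dom G y -> exists z, G (x, y, z)].

Lemma pairing_dom_graph_on T (S : set T) p : pairing_dom (graph_on S p) = S.
Proof. by apply/seteqP; split => [x [z [[]]] // | x Sx]; exists (p (x, x)). Qed.

Lemma pairing_graph_on T (S : set T) p :
  pairing_on S p -> pairing_graph (graph_on S p).
Proof.
move=> [pS pinj]; split.
- by move=> u z z' [_ /= <-] [_ /= <-].
- by move=> u u' z [Su /= <-] [Su' /= pu']; apply: pinj; rewrite ?inE.
- move=> x y z [[Sx Sy] /= <-]; rewrite !pairing_dom_graph_on.
  by split => //; exact: pS.
- by move=> x y; rewrite !pairing_dom_graph_on => Sx Sy; exists (p (x, y)).
Qed.

Lemma pairing_graph_sub_graph_on T (t0 : T) (G : set (T * T * T)) :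
  pairing_graph G ->
  exists2 p, pairing_on (pairing_dom G) p & G `<=` graph_on (pairing_dom G) p.
Proof.
move=> [Gfun Ginj Gdom Gtot]; set S := pairing_dom G.
have /choice [p Gp] : forall u, exists z, (S `*` S) u -> G (u, z).
  move=> [x y]; have [[Sx Sy]|nS] := pselect ((S `*` S) (x, y)).
    by have [z Gz] := Gtot _ _ Sx Sy; exists z.
  by exists t0 => /nS.
exists p; first split.
- by move=> u /Gp; case: u => x y /Gdom [].
- move=> u u' /set_mem /Gp Gu /set_mem /Gp Gu' puu'.
  by apply: Ginj Gu _; rewrite puu'.
- move=> [[x y] z] Gxyz; have [Sx Sy _] := Gdom _ _ _ Gxyz.
  by split => //; exact: Gfun (Gp _ _) Gxyz.
Qed.

Lemma pairing_graph_bigcup T (F : set (set (T * T * T))) :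
  F `<=` @pairing_graph T -> total_on F subset ->
  pairing_graph (\bigcup_(G in F) G).
Proof.
move=> FP Ftot.
have domU G x : F G -> pairing_dom G x -> pairing_dom (\bigcup_(G in F) G) x.
  by move=> FG [z Gz]; exists z, G.
split.
- move=> u z z' Guz Guz'; have [G FG [{}Guz {}Guz']] := chain_bigcup2 Ftot Guz Guz'.
  by have [Gfun _ _ _] := FP _ FG; exact: Gfun Guz Guz'.
- move=> u u' z Guz Gu'z; have [G FG [{}Guz {}Gu'z]] := chain_bigcup2 Ftot Guz Gu'z.
  by have [_ Ginj _ _] := FP _ FG; exact: Ginj Guz Gu'z.
- move=> x y z [G FG Gxyz]; have [_ _ Gdom _] := FP _ FG.
  have [Gx Gy Gz] := Gdom _ _ _ Gxyz.
  by split; [exact: domU Gx|exact: domU Gy|exact: domU Gz].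
- move=> x y [zx Gx] [zy Gy]; have [G FG [{}Gx {}Gy]] := chain_bigcup2 Ftot Gx Gy.
  have [_ _ _ Gtot] := FP _ FG.
  have [z Gz] := Gtot x y (ex_intro _ zx Gx) (ex_intro _ zy Gy).
  by exists z, G.
Qed.

Lemma range_pairing T (e : nat -> T) :
  injective e -> exists p, pairing_on (range e) p.
Proof.
move=> einj; pose einv x := xget 0%N [set i | e i = x].
have einvK i : einv (e i) = i.
  by apply: einj; apply: (@xgetPex _ 0%N [set k | e k = e i]); exists i.
exists (fun u => e (pickle (einv u.1, einv u.2))); split.
  by move=> u _; exists (pickle (einv u.1, einv u.2)).
move=> [? ?] [? ?] /set_mem/= [[i _ <-] [j _ <-]] /set_mem/= [[i' _ <-] [j' _ <-]].
by rewrite !einvK => /einj /(pcan_inj pickleK) [-> ->].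
Qed.

Lemma pairing_setU_inj T (S D : set T) g j a0 a1 :
  pairing_on S g -> S a0 -> S a1 -> a0 <> a1 -> set_injfun D S j ->
  exists phi, set_injfun (S `|` D) S phi.
Proof.
move=> [gS ginj] Sa0 Sa1 a01 [jS jinj].
have gI u u' : (S `*` S) u -> (S `*` S) u' -> g u = g u' -> u = u'.
  by move=> Su Su'; apply: ginj; exact: mem_set.
exists (fun x => if pselect (S x) then g (x, a0) else g (j x, a1)); split.
  move=> x SDx; case: pselect => Sx; apply: gS; split => //.
  by case: SDx => // /jS.
move=> x x' /set_mem SDx /set_mem SDx'.
have Dx : ~ S x -> D x by case: SDx.
have Dx' : ~ S x' -> D x' by case: SDx'.
case: pselect => Sx; case: pselect => Sx' /gI.
- by move=> /(_ (conj Sx Sa0) (conj Sx' Sa0)) [].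
- by move=> /(_ (conj Sx Sa0) (conj (jS _ (Dx' Sx')) Sa1)) [_ /a01].
- by move=> /(_ (conj (jS _ (Dx Sx)) Sa1) (conj Sx' Sa0)) [_ /esym /a01].
- move=> /(_ (conj (jS _ (Dx Sx)) Sa1) (conj (jS _ (Dx' Sx')) Sa1)) [].
  exact: jinj (mem_set (Dx Sx)) (mem_set (Dx' Sx')).
Qed.

Lemma pairing_comp T (S A : set T) g phi : pairing_on S g ->
  set_injfun A S phi -> set_injfun (A `*` A) S (fun u => g (phi u.1, phi u.2)).
Proof.
move=> [gS ginj] [phiS phiinj].
split => [[x y] [/phiS Sx /phiS Sy]|]; first exact: gS.
move=> [x y] [x' y'] /set_mem/= [Ax Ay] /set_mem/= [Ax' Ay'] /= gxy.
have SS z z' : A z -> A z' -> (phi z, phi z') \in S `*` S.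
  by move=> Az Az'; apply: mem_set; split; exact: phiS.
have [] := ginj _ _ (SS _ _ Ax Ay) (SS _ _ Ax' Ay') gxy.
move=> /(phiinj _ _ (mem_set Ax) (mem_set Ax')) ->.
by move=> /(phiinj _ _ (mem_set Ay) (mem_set Ay')) ->.
Qed.

Lemma pairing_extend T (S S' : set T) g k : S `<=` S' -> pairing_on S g ->
  set_injfun (S' `*` S') (S' `\` S) k ->
  exists2 p, pairing_on S' p & forall u, (S `*` S) u -> p u = g u.
Proof.
move=> SS' [gS ginj] [kS kinj].
exists (fun u => if pselect ((S `*` S) u) then g u else k u); last first.
  by move=> u Su; case: pselect.
split.
  move=> u S'u; case: pselect => [Su|nSu]; first exact/SS'/gS.
  by have [] := kS _ S'u.
move=> u u' S'u S'u'; case: pselect => Su; case: pselect => Su' /=.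
- by apply: ginj; exact: mem_set.
- by move=> gk; have [_] := kS _ (set_mem S'u'); rewrite -gk => /(_ (gS _ Su)).
- by move=> kg; have [_] := kS _ (set_mem S'u); rewrite kg => /(_ (gS _ Su')).
- exact: kinj.
Qed.

Lemma maximal_pairing_graph T (G0 : set (T * T * T)) :
  pairing_graph G0 -> G0 !=set0 ->
  exists G, [/\ pairing_graph G, G0 `<=` G &
              forall G', G `<` G' -> ~ pairing_graph G'].
Proof.
move=> PG0 [t0 G0t0].
pose P G := pairing_graph G /\ (G = set0 \/ G0 `<=` G).
have [G [[PG G0G] Gmax]] : exists G, P G /\ forall G', G `<` G' -> ~ P G'.
  apply: Zorn_bigcup => F FP Ftot; split.
    by apply: pairing_graph_bigcup Ftot => G /FP [].
  have [[G FG sG]|nG0] := pselect (exists2 G, F G & G0 `<=` G).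
    by right; apply: subset_trans sG _; exact: bigcup_sup.
  left; apply/seteqP; split => // t [G FG Gt].
  by have [_ [Gnil|sG]] := FP _ FG; [rewrite Gnil in Gt|case: nG0; exists G].
have {}G0G : G0 `<=` G.
  case: G0G => [Gnil|//]; exfalso; apply: (Gmax G0); last by split; [|right].
  by rewrite Gnil; split => // /(_ t0 G0t0).
exists G; split => // G' GG' PG'; apply: (Gmax G' GG'); split => //.
by right; apply: subset_trans G0G (properW GG').
Qed.

Lemma pairing_graph_extend T (G : set (T * T * T)) (a0 a1 : T) h :
  pairing_graph G -> pairing_dom G a0 -> pairing_dom G a1 -> a0 <> a1 ->
  set_injfun (pairing_dom G) (~` pairing_dom G) h ->
  exists2 G', G `<` G' & pairing_graph G'.
Proof.
move=> PG Sa0 Sa1 a01 hP; have [hS hinj] := hP.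
set S := pairing_dom G; set S' := S `|` h @` S.
have [g gP Gg] := pairing_graph_sub_graph_on a0 PG.
have hinvP : set_injfun (h @` S) S ('pinv_(fun=> a0) S h).
  by have [] := injpinv_bij (fun=> a0) hinj.
have [phi phiP] := pairing_setU_inj gP Sa0 Sa1 a01 hinvP.
(* S' injects into S, so S' * S' injects via h into h(S), which avoids S. *)
have [pS pinj] := pairing_comp gP phiP.
have kP : set_injfun (S' `*` S') (S' `\` S) (fun u => h (g (phi u.1, phi u.2))).
  split => [u /pS Su|u u' Su Su'].
    by split; [right; exists (g (phi u.1, phi u.2))|exact: hS].
  move=> /(hinj _ _ (mem_set (pS _ (set_mem Su))) (mem_set (pS _ (set_mem Su')))).
  exact: pinj.
have [p pP pg] := pairing_extend (@subsetUl _ S (h @` S)) gP kP.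
exists (graph_on S' p); last exact: pairing_graph_on.
split => [t /Gg [[Sx Sy] gt]|]; first by split; [split; left|rewrite pg].
move=> /(_ (h a0, h a0, p (h a0, h a0))) S'G.
apply: (hS _ Sa0); exists (p (h a0, h a0)); apply: S'G.
by split => //; split; right; exists a0.
Qed.

Lemma nat_inj_pairing T (e : nat -> T) :
  injective e -> exists p : T * T -> T, injective p.
Proof.
move=> einj; have [p0 p0P] := range_pairing einj.
have seed0 : graph_on (range e) p0 !=set0.
  by exists (e 0%N, e 0%N, p0 (e 0%N, e 0%N)); split => //; split; exists 0%N.
have [G [PG seedG Gmax]] := maximal_pairing_graph (pairing_graph_on p0P) seed0.
set S := pairing_dom G.
have eS i : S (e i).
  by exists (p0 (e i, e i)); apply: seedG; split => //; split; exists i.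
have e01 : e 0%N <> e 1%N by move/einj.
have [[h /(pairing_graph_extend PG (eS 0%N) (eS 1%N) e01) [G' /Gmax]] //|[j jP]] :=
  set_injfun_total (e 0%N) (e 0%N) S (~` S).
have [g gP _] := pairing_graph_sub_graph_on (e 0%N) PG.
have [phi] := pairing_setU_inj gP (eS 0%N) (eS 1%N) e01 jP.
rewrite setUv => /(pairing_comp gP) [_ pinj].
by exists (fun u => g (phi u.1, phi u.2)) => u u'; apply: pinj; exact: mem_set.
Qed.

Lemma pairing_fun_ord_inj T (t0 : T) (p : T * T -> T) : injective p ->
  forall n, exists f : ('I_n -> T) -> T, injective f.
Proof.
move=> pinj n; pose enc (s : seq T) := foldr (fun x z => p (x, z)) t0 s.
have encinj s s' : size s = size s' -> enc s = enc s' -> s = s'.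
  by elim: s s' => [|x s IH] [|x' s'] //= [/IH sE] /pinj [-> /sE ->].
exists (fun a => enc [seq a i | i <- enum 'I_n]) => a b /encinj.
rewrite !size_map => /(_ erefl) /eq_in_map ab.
by apply: funext => i; apply: ab; rewrite mem_enum.
Qed.

Lemma card_le_setT_inj (J K : Type) :
  ([set: J] #<= [set: K])%card -> exists f : J -> K, injective f.
Proof.
move/card_leP => [F]; exists (fun j => val (F (SigSub (mem_set (I : [set: J] j))))).
move=> x y /= /val_inj.
by move=> /(@inj _ _ _ F (SigSub _) (SigSub _) (mem_set I) (mem_set I)) /(congr1 val).
Qed.

Lemma finite_bigcap_open (X : topologicalType) (J : Type) (U : J -> set X) :
  finite_set [set: J] -> (forall j, open (U j)) ->
  open (\bigcap_(j in [set: J]) U j).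
Proof.
elim/Pchoice: J U => J U finJ oU; have [D DE] := finite_fsetP.1 finJ.
rewrite openE => x Ux; rewrite /interior /= DE; apply: filter_bigI => j _.
by apply: open_nbhs_nbhs; split => //; apply: Ux.
Qed.

Lemma pnumber_infinite (X : topologicalType) (K : Type) :
  ~ discrete_top X -> pnumber_is X K -> infinite_set [set: K].
Proof.
move=> nd [_ /(_ nd) [_ Kmax]] finK; apply: (Kmax nat).
  by split; [exact: finite_set_countable | exact/finite_setPn].
by move=> J U [_ /finite_setPn finJ] oU; exact: finite_bigcap_open.
Qed.

Lemma rV_nbhsP (X : topologicalType) n (M : 'rV[X]_n) (A : set 'rV[X]_n) :
  nbhs M A <-> exists2 P : 'I_n -> set X, (forall k, nbhs (M ord0 k) (P k)) &
    (forall N : 'rV[X]_n, (forall k, P k (N ord0 k)) -> A N).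
Proof.
split => [[P MP PA]|[P MP PA]].
  by exists (P ord0) => // N PN; apply: PA => i k; rewrite (ord1 i).
exists (fun _ k => P k) => [i k|N PN]; first by rewrite (ord1 i).
by apply: PA => k; exact: PN.
Qed.

Definition box (X : Type) n (W : 'I_n -> set X) : set 'rV[X]_n :=
  [set M | forall k, W k (M ord0 k)].

Lemma coord_continuous (X : topologicalType) n (k : 'I_n) :
  continuous (fun M : 'rV[X]_n => M ord0 k).
Proof.
move=> M A /= MA; apply/rV_nbhsP.
exists (fun j => if j == k then A else setT) => [j|N /(_ k)]; last by rewrite eqxx.
by case: eqP => [->|_] //; exact: filterT.
Qed.

Lemma const_mx_continuous (X : topologicalType) n :
  continuous (fun x : X => const_mx x : 'rV[X]_n).
Proof.
move=> x B /= /rV_nbhsP [P xP PB].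
have {}xP k : nbhs x (P k) by have := xP k; rewrite mxE.
apply: filterS (filter_forall _ xP) => y Py.
by apply: PB => k; rewrite mxE; exact: Py.
Qed.

Lemma open_coordP (X : topologicalType) n (k : 'I_n) (A : set X) :
  open ((fun M : 'rV[X]_n => M ord0 k) @^-1` A) <-> open A.
Proof.
split => oA; last by apply: open_comp => // M _; exact: coord_continuous.
have -> : A = (fun x => const_mx x : 'rV[X]_n) @^-1` ((fun M => M ord0 k) @^-1` A).
  by apply/seteqP; split => x /=; rewrite mxE.
by apply: open_comp => // x _; exact: const_mx_continuous.
Qed.

Lemma box_open (X : topologicalType) n (W : 'I_n -> set X) :
  (forall k, open (W k)) -> open (box W).
Proof.
move=> oW; rewrite openE => M WM; apply/rV_nbhsP; exists W => // k.
by apply: open_nbhs_nbhs; split => //; exact: WM.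
Qed.

Lemma box_closed (X : topologicalType) n (W : 'I_n -> set X) :
  (forall k, closed (W k)) -> closed (box W).
Proof.
move=> cW; have -> : box W = \bigcap_(k in [set: 'I_n]) (fun M => M ord0 k) @^-1` W k.
  by apply/seteqP; split => [M WM k _|M WM k]; exact: WM.
apply: closed_bigI => k _; apply: preimage_closed => // M _.
exact: coord_continuous.
Qed.

Lemma rV_not_discrete (X : topologicalType) n : (0 < n)%N ->
  ~ discrete_top X -> ~ discrete_top 'rV[X]_n.
Proof.
by move=> n0 nd rVd; apply: nd => A; apply/(open_coordP (Ordinal n0)).
Qed.

Lemma small_intersections_open_rV (X : topologicalType) (K : Type) n :
  small_intersections_open X K -> small_intersections_open 'rV[X]_n K.
Proof.
move=> sX J U JK oU; rewrite openE => M UM.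
have /choice [P UP] : forall j, exists P : 'I_n -> set X,
    (forall k, nbhs (M ord0 k) (P k)) /\ (forall N, box P N -> U j N).
  move=> j; have /rV_nbhsP [P MP PU] : nbhs M (U j).
    by move: (oU j); rewrite openE; apply; exact: UM.
  by exists P.
apply/rV_nbhsP; exists (fun k => \bigcap_(j in [set: J]) (P j k)°).
  move=> k; apply: open_nbhs_nbhs; split.
    by apply: sX => // j; exact: open_interior.
  by move=> j _; exact: (UP j).1.
move=> N PN j _; apply: (UP j).2 => k.
by apply: interior_subset; exact: PN.
Qed.

Lemma small_intersections_open_coord (X : topologicalType) (K : Type) n :
  (0 < n)%N -> small_intersections_open 'rV[X]_n K -> small_intersections_open X K.
Proof.
move=> n0 sY J U JK oU; apply/(open_coordP (Ordinal n0)).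
by rewrite preimage_bigcap; apply: sY => // j; apply/open_coordP.
Qed.

Lemma discrete_clopen_basis_inj (Z : topologicalType) (K1 K2 : Type)
    (f : K1 -> K2) :
  injective f -> has_discrete_clopen_basis Z K1 -> has_discrete_clopen_basis Z K2.
Proof.
move=> finj [B [Bd [Bc Bbasis]]].
exists (fun b => [set U | exists2 a, f a = b & B a U]); split; [|split].
- move=> b x; have [[a <-]|nb] := pselect (exists a, f a = b).
    have [V [xV VB]] := Bd a x; exists V; split => // U U'.
    by move=> [a1 /finj -> BU] [a2 /finj -> BU']; exact: VB.
  exists setT; split; first exact: filterT.
  by move=> U U' [a fa]; case: nb; exists a.
- by move=> b U [a _ BU]; exact: Bc BU.
- suff -> : \bigcup_(b in [set: K2]) [set U | exists2 a, f a = b & B a U] =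
            \bigcup_(a in [set: K1]) B a by [].
  apply/seteqP; split => U [b _]; first by move=> [a _ BU]; exists a.
  by move=> BU; exists (f b) => //; exists b.
Qed.

Lemma discrete_clopen_basis_rV (X : topologicalType) (K : Type) n :
  has_discrete_clopen_basis X K -> has_discrete_clopen_basis 'rV[X]_n ('I_n -> K).
Proof.
move=> [B [Bd [Bc [_ Bb]]]].
have boxBc (a : 'I_n -> K) (W : 'I_n -> set X) :
    (forall k, B (a k) (W k)) -> clopen (box W).
  move=> BW; split; [apply: box_open|apply: box_closed] => k;
    by have [] := Bc _ _ (BW k).
exists (fun a => @box X n @` [set W | forall k, B (a k) (W k)]); split; [|split].
- move=> a M; have /choice [V MV] := fun k => Bd (a k) (M ord0 k).
  exists (box V); split; first by apply/rV_nbhsP; exists V => // k; have [] := MV k.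
  move=> _ _ [W1 BW1 <-] [W2 BW2 <-] [N1 [W1N1 VN1]] [N2 [W2N2 VN2]].
  congr box; apply: funext => k; apply: (MV k).2 => //.
    by exists (N1 ord0 k); split; [exact: W1N1|exact: VN1].
  by exists (N2 ord0 k); split; [exact: W2N2|exact: VN2].
- by move=> a _ [W BW <-]; exact: boxBc BW.
split; first by move=> _ [a _ [W BW <-]]; exact: (boxBc _ _ BW).1.
move=> M A /rV_nbhsP [P MP PA].
have /choice [aU aUP] : forall k, exists aU : K * set X,
    [/\ B aU.1 aU.2, aU.2 (M ord0 k) & aU.2 `<=` P k].
  move=> k; have [U [[a _ BU] UM] UP] := Bb (M ord0 k) (P k) (MP k).
  by exists (a, U).
exists (box (fun k => (aU k).2)).
  split; last by move=> k; have [] := aUP k.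
  exists (fun k => (aU k).1) => //.
  by exists (fun k => (aU k).2) => // k; have [] := aUP k.
by move=> N UN; apply: PA => k; have [_ _] := aUP k; apply; exact: UN.
Qed.

(* X^n is the type 'rV[X]_n of row vectors with the product (matrix) topology. *)
Theorem lemma2p3 (X : topologicalType) (K : Type) :
  tychonoff_space X -> ~ discrete_top X ->
  pnumber_is X K -> has_discrete_clopen_basis X K ->
  forall n : nat, (0 < n)%N ->
    pnumber_is 'rV[X]_n K /\ has_discrete_clopen_basis 'rV[X]_n K.
Proof.
move=> _ nd pX bX n n0.
have /infiniteP /card_le_setT_inj [e einj] := pnumber_infinite nd pX.
have [p pinj] := nat_inj_pairing einj.
have [enc encinj] := pairing_fun_ord_inj (e 0%N) pinj n.
split; last exact: discrete_clopen_basis_inj encinj (discrete_clopen_basis_rV n bX).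
have [_ /(_ nd) [sX Kmax]] := pX.
split => [/(rV_not_discrete n0 nd) //|_].
split; first exact: small_intersections_open_rV.
by move=> K' KK' /(small_intersections_open_coord n0); exact: Kmax.
Qed.
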